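(* Let $n\ge 2$, $\mathsf u\in\mathcal S_n$ and $0\le j<n(n-1)$. If $\ell(u_{(j)}\sigma_{j+1})<\ell(u_{(j)})$, then $u_{j+1}=\sigma_{j+1}$.
   Context: $\widetilde S_n$ is the affine symmetric group (bijections $w:\mathbb Z\to\mathbb Z$ with $w(i+n)=w(i)+n$ and $\sum_{i=1}^n w(i)=\binom{n+1}2$, under composition), a Coxeter group with simple reflections $s_i=(\!(i,i+1)\!)$, $i\in\{0,\dots,n-1\}$, where $(\!(i,j)\!)$ swaps $i+kn$ and $j+kn$ for all $k$; $\ell$ denotes Coxeter length with respect to these generators. $\bm\lambda_n$ is the word $[s_0,\dots,s_{n-1}]$ repeated $n-1$ times with $j$-th letter $\sigma_j=s_{(j-1)\bmod n}$ (index in $\{0,\dots,n-1\}$). A subword is $\mathsf u=[u_1,\dots,u_{n(n-1)}]$ with $u_j\in\{\sigma_j,e\}$; $j$ is a skip if $u_j=e$. $u_{(j)}=u_1\cdots u_j$, $u_{(0)}=e$. $\mathcal S_n$ is the set of subwords with exactly $2n-2$ skips and $u_1\cdots u_{n(n-1)}=e$. *)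

From mathcomp Require Import all_boot all_order all_algebra.
Set Implicit Arguments. Unset Strict Implicit. Unset Printing Implicit Defensive.
Import GRing.Theory Num.Theory.

(* Elements of the affine symmetric group are represented as functions
   int -> int; group product is composition: (u * v) x = u (v x). *)

Definition sref (n i : nat) (x : int) : int :=
  let r := ((x - i%:Z)%R %% n%:Z)%Z in
  if r == 0%R then (x + 1)%R else if r == 1%R then (x - 1)%R else x.

Definition word_eval (n : nat) (w : seq nat) : int -> int :=
  foldr (fun i f => sref n i \o f) id w.

Definition has_length (n : nat) (f : int -> int) (k : nat) : Prop :=
  (exists w : seq nat, all (fun i => i < n)%N w /\ size w = k /\
                       f =1 word_eval n w) /\
  (forall w : seq nat, all (fun i => i < n)%N w -> f =1 word_eval n w ->
                       (k <= size w)%N).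

(* Letter at 0-based position p of lambda_n: sigma_{p+1} = s_{p mod n}. *)
Definition lam_letter (n p : nat) : nat := (p %% n)%N.

(* A subword u of lambda_n is encoded by a mask m : seq bool of length
   n(n-1); m`_p = true iff u_{p+1} = sigma_{p+1} (false iff p+1 is a skip).
   [prefix_word n m j] is the word whose product is u_(j) = u_1 ... u_j. *)
Definition prefix_word (n : nat) (m : seq bool) (j : nat) : seq nat :=
  [seq lam_letter n p | p <- iota 0 j & nth false m p].

Definition prefix_prod (n : nat) (m : seq bool) (j : nat) : int -> int :=
  word_eval n (prefix_word n m j).

Definition in_Sn (n : nat) (m : seq bool) : Prop :=
  size m = (n * (n - 1))%N /\
  count negb m = (2 * n - 2)%N /\
  prefix_prod n m (n * (n - 1)) =1 id.

From mathcomp Require Import all_boot all_order all_algebra.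
From mathcomp Require Import zify ring.

Set Implicit Arguments. Unset Strict Implicit. Unset Printing Implicit Defensive.
Import GRing.Theory Num.Theory Order.TTheory.

(* Shi's formula l(f) = sum_(0 <= a < b < n) |floor ((f b - f a) / n)| computes the
   Coxeter length of an affine permutation, and shows that l(f s_i) = l(f) + 1 when
   f i < f (i + 1). By periodicity the hypothesis therefore says that u_(j) has a
   descent at positions j, j + 1, and it suffices to see that every skip j + 1 gives
   an ascent there.
   Write each value as x = n quo x + cls x + 1 and let mu t be the class of the value
   that u_(t+1) holds at position t + 1. An invariant of the windows t, ..., t + n - 1
   of the u_(t) shows that every class w <= n - 1 occurs exactly n - 1 times in mu,
   always at steps congruent modulo n - 1 to w plus its number of earlier occurrences,
   and that the skips are exactly the steps where mu changes value. In each column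
   modulo n - 1 the first and the last occurrence of its class force two changes
   that are ascending for a lexicographic order; since u has only 2n - 2 skips these
   are all the skips, and at an ascending change the invariant yields the ascent. *)

Lemma count_mod_partition m (P : pred nat) (s : seq nat) : 0 < m ->
  count P s = (\sum_(c < m) count (fun t => P t && (t %% m == c)) s).
Proof.
move=> m_gt0; elim: s => [|x s IH] /=; first by rewrite big1.
rewrite big_split /= -IH; congr addn.
have x_lt : x %% m < m by rewrite ltn_mod.
rewrite (bigD1 (Ordinal x_lt)) //= eqxx andbT big1 ?addn0 // => c c_neq.
by case: (P x) => //=; case: eqP => // x_c; case/eqP: c_neq; apply: val_inj.
Qed.

Lemma uniq_count_ge (T : eqType) (P : pred T) (l s : seq T) :
  uniq l -> all P l -> {subset l <= s} -> size l <= count P s.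
Proof.
move=> l_uniq l_P l_s; rewrite -size_filter; apply: uniq_leq_size => // x x_l.
by rewrite mem_filter (allP l_P x x_l) l_s.
Qed.

Lemma count_negb_nth (s : seq bool) :
  count negb s = count (fun t => ~~ nth false s t) (iota 0 (size s)).
Proof. by rewrite -{1}(mkseq_nth false s) /mkseq count_map. Qed.

Section BreakCounting.
Variable m : nat.
Hypothesis m_gt0 : 0 < m.
Variable mu : nat -> nat.

Definition occ w t := count (fun s => mu s == w) (iota 0 t).

Definition prev_val t := if t is t'.+1 then mu t' else m.

Definition is_break t := mu t != prev_val t.

Definition break_ascends t := let h := prev_val t in let a := mu t in
  (a + occ a t < h + occ h t) || (a + occ a t == h + occ h t) && (h < a).

Local Notation N := (m.+1 * m).

Hypothesis mu_le : forall t, mu t <= m.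
Hypothesis mu_mod : forall t, t = mu t + occ (mu t) t %[mod m].
Hypothesis occ_final : forall w, w <= m -> occ w N = m.
Hypothesis mu_last : mu N.-1 = m.
Hypothesis break_count : count is_break (iota 0 N) = 2 * m.

Lemma occS w t : occ w t.+1 = (occ w t + (mu t == w)).
Proof. by rewrite /occ -addn1 iotaD count_cat /= add0n addn0. Qed.

Lemma occ_mono w t1 t2 : t1 <= t2 -> occ w t1 <= occ w t2.
Proof. by move=> t12; rewrite /occ -(subnKC t12) iotaD count_cat leq_addr. Qed.

Lemma occ_le w t : w <= m -> t <= N -> occ w t <= m.
Proof. by move=> w_le t_le; rewrite -(occ_final w_le) occ_mono. Qed.

Lemma occ_reach w k T : k < occ w T ->
  exists t, [/\ t < T, mu t = w & occ w t = k].
Proof.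
elim: T => [|T IH] //; rewrite occS; case: (ltnP k (occ w T)) => k_lt.
  by move=> _; have [t [t_lt mu_t occ_t]] := IH k_lt; exists t; split => //; lia.
by case: eqP => [mu_T|_] k_lt'; [exists T; split => //; lia | lia].
Qed.

Lemma first_occurrence_break c : c < m ->
  exists t, [/\ t < N, t %% m = c, occ c t = 0, is_break t & break_ascends t].
Proof.
move=> c_lt; have [t [t_lt mu_t occ_t]] : exists t, [/\ t < N, mu t = c & occ c t = 0].
  by apply: occ_reach; rewrite occ_final; lia.
have t_mod : t %% m = c by rewrite mu_mod mu_t occ_t addn0 modn_small.
suff /andP[] : is_break t && break_ascends t by exists t.
rewrite /is_break /break_ascends mu_t occ_t addn0.
case: t {t_lt} t_mod mu_t occ_t => [|s] t_mod mu_t occ_t /=; first by rewrite /occ /=; lia.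
have mu_s : mu s != c by apply/eqP => mu_sc; move: occ_t; rewrite occS mu_sc eqxx addn1.
have h_mod : ((mu s + occ (mu s) s.+1) %% m = c).
  by rewrite occS eqxx addnA -modnDml -mu_mod modnDml addn1.
have := leq_mod (mu s + occ (mu s) s.+1) m; rewrite h_mod.
by rewrite eq_sym mu_s; lia.
Qed.

Lemma last_occurrence_break c : c < m ->
  exists t, [/\ t < N, t %% m = c, occ c t = m, is_break t & break_ascends t].
Proof.
move=> c_lt; have [s [s_lt mu_s occ_s]] : exists s, [/\ s < N, mu s = c & occ c s = m.-1].
  by apply: occ_reach; rewrite occ_final; lia.
have occ_s1 : occ c s.+1 = m by rewrite occS mu_s eqxx; lia.
have s1_lt : s.+1 < N.
  rewrite ltn_neqAle s_lt andbT; apply/eqP => s1N.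
  by move: mu_last; rewrite -s1N /= mu_s; lia.
have s1_mod : s.+1 %% m = c.
  rewrite -addn1 -modnDml (mu_mod s) mu_s occ_s modnDml -addnA.
  by rewrite (_ : (m.-1 + 1 = m)) ?modnDr ?modn_small //; lia.
exists s.+1; suff /andP[] : is_break s.+1 && break_ascends s.+1 by [].
rewrite /is_break /break_ascends /= mu_s occ_s1.
set y := mu s.+1.
have occ_y : occ y s.+2 <= m by apply: occ_le; rewrite ?mu_le //; lia.
have y_neq : y != c by apply/eqP => y_c; move: occ_y; rewrite occS -/y y_c eqxx occ_s1; lia.
have y_mod : ((y + occ y s.+1) %% m = c) by rewrite -mu_mod.
have := mu_le s.+1; rewrite occS -/y eqxx -/y in occ_y => y_le.
have x_le : y + occ y s.+1 <= c + m.
  have := divn_eq (y + occ y s.+1) m; rewrite y_mod.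
  have : ((y + occ y s.+1) %/ m <= 1) by rewrite -ltnS ltn_divLR //; lia.
  by case: (_ %/ m) => [|[|]] //; lia.
by rewrite y_neq; lia.
Qed.

(* Each of the m columns modulo m holds two ascending breaks, at the first occurrence
   of its value and just after the last one; with only 2m breaks, there are no others. *)
Lemma breaks_ascend t : t < N -> is_break t -> break_ascends t.
Proof.
move=> t_lt t_brk; apply/contraT => t_bad.
have c0_lt : t %% m < m by rewrite ltn_mod.
pose in_col (c : 'I_m) s := is_break s && (s %% m == c).
have col_count (c : 'I_m) :
    (2 + (c == Ordinal c0_lt) <= count (in_col c) (iota 0 N)).
  have [t1 [t1_lt t1_mod occ1 brk1 asc1]] := first_occurrence_break (ltn_ord c).
  have [t2 [t2_lt t2_mod occ2 brk2 asc2]] := last_occurrence_break (ltn_ord c).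
  have t12 : t1 != t2 by apply/eqP => t12; move: occ2; rewrite -t12 occ1; lia.
  have t_t1 : t != t1 by apply/eqP => tt1; rewrite tt1 asc1 in t_bad.
  have t_t2 : t != t2 by apply/eqP => tt2; rewrite tt2 asc2 in t_bad.
  case: eqP => [c_c0|_].
  - apply: (uniq_count_ge (l := [:: t1; t2; t])).
    + by rewrite /= !inE negb_or t12 eq_sym t_t1 eq_sym t_t2.
    + by rewrite /= /in_col brk1 brk2 t_brk t1_mod t2_mod c_c0 !eqxx.
    + by move=> x; rewrite !inE mem_iota => /or3P[] /eqP ->; lia.
  - apply: (uniq_count_ge (l := [:: t1; t2])).
    + by rewrite /= inE t12.
    + by rewrite /= /in_col brk1 brk2 t1_mod t2_mod !eqxx.
    + by move=> x; rewrite !inE mem_iota => /orP[] /eqP ->; lia.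
have : (\sum_(c < m) (2 + (c == Ordinal c0_lt)) <=
         \sum_(c < m) count (in_col c) (iota 0 N)) by apply: leq_sum => c _.
rewrite -count_mod_partition // break_count.
rewrite big_split sum_nat_const card_ord (bigD1 (Ordinal c0_lt)) //= eqxx big1; first lia.
by move=> c /negPf ->.
Qed.

End BreakCounting.

Section SimpleReflections.
Local Open Scope ring_scope.
Variable n : nat.
Hypothesis n_ge2 : (2 <= n)%N.

Lemma natz_gt0 : 0 < n%:Z. Proof. by rewrite ltz_nat; lia. Qed.

Lemma natz_neq0 : n%:Z != 0. Proof. by rewrite eqz_nat; lia. Qed.

Lemma modz_ge0_lt (x : int) : 0 <= (x %% n%:Z)%Z < n%:Z.
Proof. by rewrite modz_ge0 ?natz_neq0 // ltz_pmod ?natz_gt0. Qed.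

Lemma divz_modz_uniq (x q r : int) : 0 <= r < n%:Z -> x = q * n%:Z + r ->
  (x %/ n%:Z)%Z = q /\ (x %% n%:Z)%Z = r.
Proof.
move=> r_rng ->; split; last by rewrite modzMDl modz_small.
by rewrite divzMDl ?natz_neq0 // divz_small ?addr0 // gtz0_abs ?natz_gt0.
Qed.

Lemma modz_small1 : (1 %% n%:Z)%Z = 1.
Proof. by rewrite modz_small // ltz_nat; lia. Qed.

Lemma sref_addn (i : nat) (x : int) : sref n i (x + n%:Z) = sref n i x + n%:Z.
Proof.
rewrite /sref (_ : x + n%:Z - i%:Z = (x - i%:Z) + 1 * n%:Z); last by ring.
rewrite -modzDmr modzMl addr0.
by case: ifP => _; [|case: ifP => _]; ring.
Qed.

Lemma sref_id (i : nat) (x : int) : ((x - i%:Z) %% n%:Z)%Z != 0 ->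
  ((x - i%:Z) %% n%:Z)%Z != 1 -> sref n i x = x.
Proof. by rewrite /sref => /negPf -> /negPf ->. Qed.

Lemma sref_up (i : nat) (k : int) : sref n i (i%:Z + k * n%:Z) = i%:Z + k * n%:Z + 1.
Proof.
rewrite /sref (_ : i%:Z + k * n%:Z - i%:Z = k * n%:Z + 0); last by ring.
by rewrite modzMDl mod0z eqxx.
Qed.

Lemma sref_down (i : nat) (k : int) : sref n i (i%:Z + k * n%:Z + 1) = i%:Z + k * n%:Z.
Proof.
rewrite /sref (_ : i%:Z + k * n%:Z + 1 - i%:Z = k * n%:Z + 1); last by ring.
by rewrite modzMDl modz_small1 oner_eq0 eqxx addrK.
Qed.

Lemma srefK (i : nat) : involutive (sref n i).
Proof.
move=> x; set q := ((x - i%:Z) %/ n%:Z)%Z; set r := ((x - i%:Z) %% n%:Z)%Z.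
have -> : x = i%:Z + q * n%:Z + r.
  by have := divz_eq (x - i%:Z) n%:Z; rewrite -/q -/r -addrA => <-; ring.
case: (ltgtP r 1) => [r_lt1|r_gt1|->]; last by rewrite sref_down sref_up.
  have -> : r = 0 by have := modz_ge0_lt (x - i%:Z); rewrite -/r; lia.
  by rewrite addr0 sref_up sref_down.
have r_rng : 0 <= r < n%:Z by exact: modz_ge0_lt.
have fix_r : sref n i (i%:Z + q * n%:Z + r) = i%:Z + q * n%:Z + r.
  have rE : ((i%:Z + q * n%:Z + r - i%:Z) %% n%:Z)%Z = r.
    by rewrite (_ : _ - _ = q * n%:Z + r) ?modzMDl ?modz_small //; ring.
  by apply: sref_id; rewrite rE; apply/eqP; lia.
by rewrite !fix_r.
Qed.

Lemma sref_inj (i : nat) : injective (sref n i).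
Proof. exact: inv_inj (srefK i). Qed.

Lemma sref_at (i : nat) : sref n i i%:Z = i%:Z + 1.
Proof. by have := sref_up i 0; rewrite mul0r addr0. Qed.

Lemma sref_atS (i : nat) : sref n i (i%:Z + 1) = i%:Z.
Proof. by have := sref_down i 0; rewrite mul0r addr0. Qed.

Lemma sref_fix (i : nat) (x : int) :
  (2 <= x - i%:Z < n%:Z) || (2 - n%:Z <= x - i%:Z < 0) -> sref n i x = x.
Proof.
case/orP=> x_rng.
  have xE : ((x - i%:Z) %% n%:Z)%Z = x - i%:Z by rewrite modz_small //; lia.
  by apply: sref_id; rewrite xE; apply/eqP; lia.
have [_ xE] : ((x - i%:Z) %/ n%:Z)%Z = -1 /\ ((x - i%:Z) %% n%:Z)%Z = x - i%:Z + n%:Z.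
  by apply: divz_modz_uniq => //; [lia | ring].
by apply: sref_id; rewrite xE; apply/eqP; lia.
Qed.

Lemma sref_modn_at (t : nat) : sref n (t %% n) t%:Z = t%:Z + 1.
Proof. by rewrite {2 3}(divn_eq t n) addnC PoszD PoszM sref_up. Qed.

Lemma sref_modn_atS (t : nat) : sref n (t %% n) (t%:Z + 1) = t%:Z.
Proof. by rewrite {2 3}(divn_eq t n) addnC PoszD PoszM sref_down. Qed.

Lemma sref_modn_fix (t d : nat) : (2 <= d < n)%N -> sref n (t %% n) (t + d)%N%:Z = (t + d)%N%:Z.
Proof.
move=> d_rng; have dE : ((t + d)%N%:Z - (t %% n)%N%:Z) = (t %/ n)%N%:Z * n%:Z + d%:Z.
  by rewrite {1}(divn_eq t n) !PoszD PoszM; ring.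
by apply: sref_id; rewrite dE modzMDl modz_small; lia.
Qed.

End SimpleReflections.

Section AffineLength.
Local Open Scope ring_scope.
Variable n : nat.
Hypothesis n_ge2 : (2 <= n)%N.
Implicit Types (f g : int -> int) (s : seq int).

Definition inv_weight (d : int) : nat := `|(d %/ n%:Z)%Z|%N.

Fixpoint pair_weight s : nat :=
  if s is x :: s' then (\sum_(y <- s') inv_weight (y - x) + pair_weight s')%N
  else 0%N.

Definition window f (k : int) : seq int := [seq f (k + j%:Z) | j <- iota 0 n].

(* Shi's formula for the Coxeter length of an affine permutation,
   sum_(0 <= a < b < n) |floor ((f b - f a) / n)|. *)
Definition aff_length f : nat := pair_weight (window f 0).

Definition n_periodic f := forall x, f (x + n%:Z) = f x + n%:Z.

Definition affine_perm f := [/\ n_periodic f, injective f &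
  \sum_(y <- window f 0) y = \sum_(j <- iota 0 n) j%:Z].

Lemma pair_weight_swap p x y s :
  (pair_weight (p ++ x :: y :: s) + inv_weight (x - y) =
   pair_weight (p ++ y :: x :: s) + inv_weight (y - x))%N.
Proof. by elim: p => [|z p IH] /=; rewrite ?big_cat !big_cons /=; lia. Qed.

Lemma pair_weight_rcons s z :
  pair_weight (rcons s z) = (pair_weight s + \sum_(y <- s) inv_weight (z - y))%N.
Proof.
elim: s => [|x s IH] /=; first by rewrite !big_nil.
by rewrite -cats1 big_cat big_seq1 cats1 IH big_cons /=; lia.
Qed.

Lemma pair_weight_eq0 s :
  (pair_weight s == 0%N) = pairwise (fun x y => inv_weight (y - x) == 0%N) s.
Proof.
elim: s => [|x s IH] //=; rewrite addn_eq0 IH; congr andb.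
elim: s {IH} => [|y s IH]; first by rewrite big_nil.
by rewrite big_cons /= addn_eq0 IH.
Qed.

Lemma inv_weight_eq0 d : (inv_weight d == 0%N) = (0 <= d < n%:Z).
Proof.
apply/idP/idP => [/eqP d_small | d_rng]; last first.
  by rewrite /inv_weight divz_small // gtr0_norm // natz_gt0.
have q0 : (d %/ n%:Z)%Z = 0 by apply/eqP; rewrite -absz_eq0; apply/eqP.
by rewrite (divz_eq d n%:Z) q0 mul0r add0r; exact: modz_ge0_lt.
Qed.

Lemma inv_weight_opp d : (d %% n%:Z)%Z != 0 -> 0 < d ->
  inv_weight (- d) = (inv_weight d).+1.
Proof.
move=> d_nmod d_gt0; rewrite /inv_weight.
set q := (d %/ n%:Z)%Z; set r := (d %% n%:Z)%Z.
have q_ge0 : 0 <= q by rewrite /q divz_ge0 ?natz_gt0 // ltW.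
have r_rng := modz_ge0_lt n_ge2 d; rewrite -/r in r_rng.
have [-> _] : ((- d) %/ n%:Z)%Z = - q - 1 /\ ((- d) %% n%:Z)%Z = n%:Z - r.
  apply: divz_modz_uniq => //; first by move: r_rng d_nmod => /andP[]; lia.
  by rewrite {1}(divz_eq d n%:Z) -/q -/r; ring.
lia.
Qed.

Lemma inv_weight_compl d : (d %% n%:Z)%Z != 0 -> inv_weight (n%:Z - d) = inv_weight d.
Proof.
move=> d_nmod; rewrite /inv_weight.
set q := (d %/ n%:Z)%Z; set r := (d %% n%:Z)%Z.
have r_rng := modz_ge0_lt n_ge2 d; rewrite -/r in r_rng.
have [-> _] : ((n%:Z - d) %/ n%:Z)%Z = - q /\ ((n%:Z - d) %% n%:Z)%Z = n%:Z - r.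
  apply: divz_modz_uniq => //; first by move: r_rng d_nmod => /andP[]; lia.
  by rewrite {1}(divz_eq d n%:Z) -/q -/r; ring.
by rewrite abszN.
Qed.

Lemma n_periodicMz f : n_periodic f -> forall (k : int) x, f (x + k * n%:Z) = f x + k * n%:Z.
Proof.
move=> f_per.
have f_pern (k : nat) x : f (x + k%:Z * n%:Z) = f x + k%:Z * n%:Z.
  elim: k x => [|k IH] x; first by rewrite !mul0r !addr0.
  rewrite (_ : x + k.+1%:Z * n%:Z = x + k%:Z * n%:Z + n%:Z); last by rewrite intS; ring.
  by rewrite f_per IH intS; ring.
case=> k x; first exact: f_pern.
have := f_pern k.+1 (x + Negz k * n%:Z).
by rewrite NegzE mulNr subrK => ->; ring.
Qed.

Lemma n_periodic_ltS_modz f x : n_periodic f ->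
  (f x < f (x + 1)) = (f (x %% n%:Z)%Z < f ((x %% n%:Z)%Z + 1)).
Proof.
move=> f_per; set q := (x %/ n%:Z)%Z; set r := (x %% n%:Z)%Z.
have -> : x = r + q * n%:Z by rewrite addrC [x](divz_eq _ n%:Z).
by rewrite (addrAC r) !n_periodicMz // ltrD2r.
Qed.

Lemma modz_neq0 (x : int) : 0 < `|x| < n%:Z -> (x %% n%:Z)%Z != 0.
Proof.
case/andP=> x_gt0 x_lt; apply/eqP => x_mod.
have xE := divz_eq x n%:Z; rewrite x_mod addr0 in xE.
move: x_gt0 x_lt; rewrite xE normrM (gtr0_norm (natz_gt0 n_ge2)).
rewrite pmulr_lgt0 ?(natz_gt0 n_ge2) // => q_gt0.
by rewrite gtr_pMl ?(natz_gt0 n_ge2) //; lia.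
Qed.

Lemma periodic_inj_modz_neq0 f : n_periodic f -> injective f -> forall a b : int,
  a != b -> `|a - b| < n%:Z -> ((f a - f b) %% n%:Z)%Z != 0.
Proof.
move=> f_per f_inj a b a_neq_b ab_lt; apply/eqP => fab_mod.
have ab_mod : ((a - b) %% n%:Z)%Z != 0.
  by apply: modz_neq0; rewrite ab_lt andbT normr_gt0 subr_eq0.
have fab := divz_eq (f a - f b) n%:Z; rewrite fab_mod addr0 in fab.
have : f a = f (b + ((f a - f b) %/ n%:Z)%Z * n%:Z) by rewrite n_periodicMz // -fab; ring.
by move/f_inj => aE; move: ab_mod; rewrite aE addrC addKr modzMl eqxx.
Qed.

Lemma window_split f k i : (i.+1 < n)%N ->
  window f k = [seq f (k + j%:Z) | j <- iota 0 i] ++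
    f (k + i%:Z) :: f (k + i.+1%:Z) :: [seq f (k + j%:Z) | j <- iota i.+2 (n - i.+2)].
Proof.
move=> i_lt; rewrite /window (_ : iota 0 n = iota 0 (i + (n - i.+2).+2)).
  by rewrite iotaD map_cat add0n.
by congr iota; lia.
Qed.

Lemma window_swap f g k i : (i.+1 < n)%N ->
  (forall j, (j < n)%N -> j != i -> j != i.+1 -> g (k + j%:Z) = f (k + j%:Z)) ->
  g (k + i%:Z) = f (k + i.+1%:Z) -> g (k + i.+1%:Z) = f (k + i%:Z) ->
  window g k = [seq f (k + j%:Z) | j <- iota 0 i] ++
    f (k + i.+1%:Z) :: f (k + i%:Z) :: [seq f (k + j%:Z) | j <- iota i.+2 (n - i.+2)].
Proof.
move=> i_lt gf gi gi1; rewrite (window_split g k i_lt) gi gi1.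
by congr (_ ++ _ :: _ :: _); apply/eq_in_map => j; rewrite mem_iota => j_rng;
  apply: gf; lia.
Qed.

Lemma window0E f : window f 0 = f 0 :: [seq f j%:Z | j <- iota 1 n.-1].
Proof.
rewrite /window (_ : n = n.-1.+1) /=; last by lia.
by rewrite addr0; congr cons; apply/eq_map => j; rewrite add0r.
Qed.

Lemma window1E f : n_periodic f ->
  window f 1 = rcons [seq f j%:Z | j <- iota 1 n.-1] (f 0 + n%:Z).
Proof.
move=> f_per; rewrite /window {1}(_ : n = n.-1 + 1)%N; last by lia.
rewrite iotaD map_cat add0n cats1 -f_per add0r; congr rcons; last by congr f; lia.
rewrite (_ : iota 1 n.-1 = iota (1 + 0) n.-1) // iotaDl -map_comp.
by apply/eq_map => j /=; congr f; lia.
Qed.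

Lemma pair_weight_rot x s : (forall y, y \in s -> ((y - x) %% n%:Z)%Z != 0) ->
  pair_weight (x :: s) = pair_weight (rcons s (x + n%:Z)).
Proof.
move=> s_nmod; rewrite pair_weight_rcons /= addnC; congr addn.
apply: eq_big_seq => y y_s; rewrite -(inv_weight_compl (s_nmod y y_s)); congr inv_weight.
ring.
Qed.

Lemma aff_length_window1 f : n_periodic f -> injective f ->
  aff_length f = pair_weight (window f 1).
Proof.
move=> f_per f_inj; rewrite /aff_length window0E window1E // pair_weight_rot //.
move=> y /mapP[j]; rewrite mem_iota => j_rng ->.
by apply: periodic_inj_modz_neq0 => //; [apply/eqP | rewrite subr0 ger0_norm]; lia.
Qed.

Lemma sum_window1 f : n_periodic f ->
  \sum_(y <- window f 1) y = \sum_(y <- window f 0) y + n%:Z.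
Proof.
by move=> f_per; rewrite window1E // window0E -cats1 big_cat big_seq1 big_cons /=; ring.
Qed.

Lemma window_sref f i : (i.+1 < n)%N ->
  window (f \o sref n i) 0 = [seq f (0 + j%:Z) | j <- iota 0 i] ++
    f (0 + i.+1%:Z) :: f (0 + i%:Z) :: [seq f (0 + j%:Z) | j <- iota i.+2 (n - i.+2)].
Proof.
move=> i_lt; apply: window_swap => //=.
- move=> j j_lt j_neq_i j_neq_i1; rewrite sref_fix //.
  by apply/orP; case: (ltnP j i) => j_i; [right | left]; lia.
- by rewrite !add0r sref_at // -addn1 PoszD.
- by rewrite !add0r -addn1 PoszD sref_atS.
Qed.

(* s_(n-1) swaps positions n - 1 and n, which lie in window 1 but not in window 0. *)
Lemma window_sref_last f : n_periodic f ->
  window (f \o sref n n.-1) 1 = [seq f (1 + j%:Z) | j <- iota 0 n.-2] ++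
    f (1 + n.-2.+1%:Z) :: f (1 + n.-2%:Z) ::
    [seq f (1 + j%:Z) | j <- iota n.-2.+2 (n - n.-2.+2)].
Proof.
move=> f_per; rewrite (_ : n.-1 = n.-2.+1); last by lia.
apply: window_swap => /=; first by lia.
- by move=> j j_lt j_neq j_neq1; rewrite sref_fix //; apply/orP; right; lia.
- rewrite (_ : 1 + n.-2%:Z = n.-2.+1%:Z); last by lia.
  by rewrite sref_at -addn1 PoszD addrC.
- rewrite (_ : 1 + n.-2.+1%:Z = n.-2.+1%:Z + 1); last by lia.
  by rewrite sref_atS //; congr f; lia.
Qed.

Lemma affine_perm_id : affine_perm id.
Proof.
split=> [x|x y|] //.
by rewrite /window big_map; apply: eq_bigr => j _; rewrite add0r.
Qed.

Lemma n_periodic_sref f i : n_periodic f -> n_periodic (f \o sref n i).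
Proof. by move=> f_per x /=; rewrite sref_addn f_per. Qed.

Lemma affine_perm_sref f i : affine_perm f -> (i < n)%N -> affine_perm (f \o sref n i).
Proof.
case=> f_per f_inj f_sum i_lt; split; first exact: n_periodic_sref.
  by move=> x y /= /f_inj /(sref_inj n_ge2).
case: (ltnP i.+1 n) => i1_lt.
  by rewrite window_sref // -f_sum (window_split f 0 i1_lt) !big_cat !big_cons /=; ring.
have -> : i = n.-1 by lia.
apply: (addIr n%:Z); rewrite -sum_window1; last exact: n_periodic_sref.
rewrite window_sref_last // -f_sum -sum_window1 //.
by rewrite (@window_split f 1 n.-2) ?big_cat ?big_cons /=; [ring | lia].
Qed.

Lemma aff_length_sref f i : n_periodic f -> injective f -> (i < n)%N ->
  (aff_length (f \o sref n i) + inv_weight (f (i%:Z + 1) - f i%:Z)%R =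
   aff_length f + inv_weight (f i%:Z - f (i%:Z + 1))%R)%N.
Proof.
move=> f_per f_inj i_lt; case: (ltnP i.+1 n) => i1_lt.
  rewrite /aff_length window_sref // (window_split f 0 i1_lt) !add0r -addn1 PoszD.
  exact: pair_weight_swap.
rewrite aff_length_window1; first last.
- by move=> x y /= /f_inj /(sref_inj n_ge2).
- exact: n_periodic_sref.
rewrite [aff_length f]aff_length_window1 //.
have -> : i = n.-1 by lia.
rewrite window_sref_last // (@window_split f 1 n.-2); last by lia.
rewrite (_ : n.-1%:Z + 1 = 1 + n.-2.+1%:Z); last by lia.
rewrite (_ : n.-1%:Z = 1 + n.-2%:Z); last by lia.
exact: pair_weight_swap.
Qed.

Lemma aff_length_sref_gt f i : n_periodic f -> injective f -> (i < n)%N ->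
  f i%:Z < f (i%:Z + 1) -> aff_length (f \o sref n i) = (aff_length f).+1.
Proof.
move=> f_per f_inj i_lt f_lt; have := aff_length_sref f_per f_inj i_lt.
rewrite -[f i%:Z - _]opprB inv_weight_opp ?subr_gt0 //.
  by rewrite addnS -addSn => /eqP; rewrite eqn_add2r => /eqP.
by apply: periodic_inj_modz_neq0; rewrite // ?addrK ?normr1; lia.
Qed.

Lemma aff_length_sref_lt f i : n_periodic f -> injective f -> (i < n)%N ->
  f (i%:Z + 1) < f i%:Z -> (aff_length (f \o sref n i)).+1 = aff_length f.
Proof.
move=> f_per f_inj i_lt f_gt; have := aff_length_sref f_per f_inj i_lt.
rewrite -[f (i%:Z + 1) - _]opprB inv_weight_opp ?subr_gt0 //.
  by rewrite addnS -addSn => /eqP; rewrite eqn_add2r => /eqP.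
by apply: periodic_inj_modz_neq0; rewrite // ?opprD ?addNKr ?normrN ?normr1; lia.
Qed.

Lemma affine_perm_ext f g : f =1 g -> affine_perm f -> affine_perm g.
Proof.
move=> fg [f_per f_inj f_sum]; split.
- by move=> x; rewrite -!fg f_per.
- by move=> x y; rewrite -!fg => /f_inj.
by rewrite -f_sum; congr (\sum_(y <- _) y); apply/eq_map => j; rewrite fg.
Qed.

Lemma aff_length_ext f g : f =1 g -> aff_length f = aff_length g.
Proof. by move=> fg; rewrite /aff_length /window; congr pair_weight; apply/eq_map. Qed.

Lemma word_eval_rcons w i : word_eval n (rcons w i) =1 word_eval n w \o sref n i.
Proof. by elim: w => [|a w IH] x //=; rewrite IH. Qed.

Lemma word_eval_cat w1 w2 : word_eval n (w1 ++ w2) =1 word_eval n w1 \o word_eval n w2.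
Proof. by elim: w1 => [|a w1 IH] x //=; rewrite /word_eval /= -/(word_eval n _) IH. Qed.

Lemma affine_perm_word_eval w : all (fun i => i < n)%N w -> affine_perm (word_eval n w).
Proof.
elim/last_ind: w => [_|w i IH]; first exact: affine_perm_id.
rewrite all_rcons => /andP[i_lt w_lt].
by apply: affine_perm_ext (affine_perm_sref (IH w_lt) i_lt) => x; rewrite word_eval_rcons.
Qed.

Lemma aff_length_eq0P f : reflect
  (forall a b : nat, (a < b < n)%N -> 0 <= f b%:Z - f a%:Z < n%:Z) (aff_length f == 0%N).
Proof.
rewrite /aff_length pair_weight_eq0; apply: (iffP (pairwiseP 0)) => f_wt a b.
  case/andP=> a_lt_b b_lt; have := f_wt a b; rewrite !inE size_map size_iota.
  rewrite !(nth_map 0%N) ?size_iota ?nth_iota ?add0r -?inv_weight_eq0; try lia.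
  by apply; lia.
rewrite !inE size_map size_iota => a_lt b_lt a_lt_b.
by rewrite !(nth_map 0%N) ?size_iota // !nth_iota // !add0r inv_weight_eq0 f_wt ?a_lt_b.
Qed.

Lemma aff_length_id : aff_length id = 0%N.
Proof. by apply/eqP/aff_length_eq0P => a b /andP[a_lt_b b_lt]; lia. Qed.

Lemma increasing_periodic f : n_periodic f ->
  (forall i, (i < n)%N -> f i%:Z < f (i%:Z + 1)) -> forall x, f x < f (x + 1).
Proof.
move=> f_per f_up x; rewrite n_periodic_ltS_modz //.
have /andP[r_ge0 r_lt] := modz_ge0_lt n_ge2 x.
by rewrite -(gez0_abs r_ge0) f_up //; lia.
Qed.

Lemma increasing_addn f : (forall x, f x < f (x + 1)) ->
  forall x (k : nat), f x + k%:Z <= f (x + k%:Z).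
Proof.
move=> f_up x; elim=> [|k IH]; first by rewrite !addr0.
rewrite intS (addrC 1) !addrA.
by apply: le_trans (_ : _ <= f (x + k%:Z) + 1) _; rewrite ?lerD2r ?lezD1 ?f_up.
Qed.

Lemma aff_length_descent f : n_periodic f -> injective f -> (0 < aff_length f)%N ->
  exists2 i, (i < n)%N & f (i%:Z + 1) < f i%:Z.
Proof.
move=> f_per f_inj L_gt0.
have [/existsP[i fi_gt]|/existsPn no_descent] :=
  boolP [exists i : 'I_n, f (i%:Z + 1) < f i%:Z]; first by exists i.
suff /eqP L0 : aff_length f == 0%N by rewrite L0 in L_gt0.
have f_up : forall x, f x < f (x + 1).
  apply: increasing_periodic => // i i_lt.
  have /= := no_descent (Ordinal i_lt); rewrite -leNgt lt_def => ->.
  by rewrite andbT; apply/eqP => /f_inj; lia.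
apply/aff_length_eq0P => a b /andP[a_lt_b b_lt].
have ab := increasing_addn f_up a%:Z (b - a)%N.
have ba := increasing_addn f_up b%:Z (a + n - b)%N.
rewrite (_ : a%:Z + (b - a)%N%:Z = b%:Z) in ab; last by lia.
rewrite (_ : b%:Z + (a + n - b)%N%:Z = a%:Z + n%:Z) in ba; last by lia.
rewrite f_per in ba.
lia.
Qed.

Lemma aff_length_eq0_window f : injective f -> aff_length f = 0%N ->
  forall a, (a < n)%N -> f a%:Z = f 0 + a%:Z.
Proof.
move=> f_inj /eqP/aff_length_eq0P f_wt.
have f_step a b : (a < b < n)%N -> f a%:Z < f b%:Z /\ f b%:Z - f a%:Z < n%:Z.
  move=> ab_rng; have /andP[ab_ge0 ab_lt] := f_wt a b ab_rng.
  split=> //; rewrite lt_def -subr_ge0 ab_ge0 andbT.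
  by apply/eqP => /f_inj; lia.
have f_addn a k : (a + k < n)%N -> f a%:Z + k%:Z <= f (a + k)%N%:Z.
  elim: k => [|k IH] ak_lt; first by rewrite addr0 addn0.
  have [+ _] := f_step (a + k)%N (a + k.+1)%N ltac:(lia).
  rewrite -lezD1; apply: le_trans; rewrite intS (addrC 1) addrA lerD2r.
  by apply: IH; lia.
move=> a a_lt; have lo := f_addn 0%N a a_lt; rewrite add0n in lo.
have hi := f_addn a (n.-1 - a)%N; rewrite (_ : (a + (n.-1 - a))%N = n.-1) in hi; last lia.
have [_ span] := f_step 0%N n.-1 ltac:(lia).
have f0 : f 0%N%:Z = f 0 by [].
by have := hi ltac:(lia); move: lo span; rewrite f0; lia.
Qed.

Lemma aff_length_eq0_id f : affine_perm f -> aff_length f = 0%N -> f =1 id.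
Proof.
case=> f_per f_inj f_sum L0; have f_win := aff_length_eq0_window f_inj L0.
have f00 : f 0 = 0.
  have : \sum_(j <- iota 0 n) (f 0 + j%:Z) = \sum_(j <- iota 0 n) j%:Z.
    rewrite -f_sum /window big_map; apply: eq_big_seq => j.
    by rewrite mem_iota add0r => /andP[_ j_lt]; rewrite f_win.
  rewrite big_split /= -[RHS]add0r => /addIr.
  rewrite big_const_seq count_predT size_iota iter_addr_0 -mulr_natr => /eqP.
  by rewrite mulf_eq0 pnatr_eq0 => /orP[/eqP //|]; lia.
move=> x /=; rewrite (divz_eq x n%:Z) addrC n_periodicMz //.
have /andP[r_ge0 r_lt] := modz_ge0_lt n_ge2 x.
by rewrite -(gez0_abs r_ge0) f_win ?f00 ?add0r //; lia.
Qed.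

Lemma aff_length_sref_le f i : n_periodic f -> injective f -> (i < n)%N ->
  (aff_length (f \o sref n i) <= (aff_length f).+1)%N.
Proof.
move=> f_per f_inj i_lt; case: (ltgtP (f i%:Z) (f (i%:Z + 1))) => [f_lt|f_gt|/f_inj].
- by rewrite aff_length_sref_gt.
- by rewrite -(aff_length_sref_lt f_per f_inj i_lt f_gt); lia.
- by lia.
Qed.

Lemma aff_length_word_eval_le w : all (fun i => i < n)%N w ->
  (aff_length (word_eval n w) <= size w)%N.
Proof.
elim/last_ind: w => [_|w i IH]; first by rewrite (aff_length_ext (g := id)) ?aff_length_id.
rewrite all_rcons size_rcons => /andP[i_lt w_lt].
have [w_per w_inj _] := affine_perm_word_eval w_lt.
rewrite (aff_length_ext (word_eval_rcons w i)).
by apply: leq_trans (aff_length_sref_le w_per w_inj i_lt) _; rewrite ltnS IH.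
Qed.

(* Peeling off a descent lowers the length by one, so a word of length [aff_length f] exists. *)
Lemma word_eval_aff_length f : affine_perm f ->
  exists2 w, all (fun i => i < n)%N w & size w = aff_length f /\ f =1 word_eval n w.
Proof.
elim: {f}(aff_length f) {-2}f (erefl (aff_length f)) => [|k IH] f Lf f_perm.
  by exists [::] => //; split=> //; apply: aff_length_eq0_id.
have [f_per f_inj _] := f_perm.
have [i i_lt f_gt] := aff_length_descent f_per f_inj (ltac:(lia) : (0 < aff_length f)%N).
have Lfs := aff_length_sref_lt f_per f_inj i_lt f_gt.
have [w w_lt [w_size fs_w]] := IH (f \o sref n i) ltac:(lia) (affine_perm_sref f_perm i_lt).
exists (rcons w i); first by rewrite all_rcons i_lt w_lt.
split; first by rewrite size_rcons w_size; lia.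
by move=> x; rewrite word_eval_rcons /= -fs_w /= srefK.
Qed.

Lemma has_length_affine_perm f k : has_length n f k -> affine_perm f.
Proof.
case=> [[w [w_lt [_ f_w]]] _].
by apply: affine_perm_ext (affine_perm_word_eval w_lt) => x; rewrite f_w.
Qed.

Lemma has_length_aff_length f k : has_length n f k -> k = aff_length f.
Proof.
move=> f_len; have f_perm := has_length_affine_perm f_len.
case: f_len => [[w [w_lt [w_size f_w]]] k_min].
have [w' w'_lt [w'_size f_w']] := word_eval_aff_length f_perm.
apply/eqP; rewrite eqn_leq -{1}w'_size k_min //= (aff_length_ext f_w) -w_size.
exact: aff_length_word_eval_le.
Qed.

Lemma has_length_sref_gt f i a b : (i < n)%N -> f i%:Z < f (i%:Z + 1) ->
  has_length n (f \o sref n i) a -> has_length n f b -> a = b.+1.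
Proof.
move=> i_lt f_lt /has_length_aff_length -> f_len.
have [f_per f_inj _] := has_length_affine_perm f_len.
by rewrite (has_length_aff_length f_len) aff_length_sref_gt.
Qed.

End AffineLength.

Section ValueClasses.
Local Open Scope ring_scope.
Variable n : nat.
Hypothesis n_ge2 : (2 <= n)%N.

(* Values are read with an offset of one, x = quo x * n + cls x + 1, so that
   1, ..., n have level 0 and classes 0, ..., n - 1. *)
Definition cls (x : int) : nat := `|((x - 1) %% n%:Z)%Z|%N.
Definition quo (x : int) : int := ((x - 1) %/ n%:Z)%Z.

Lemma cls_quoE x : x - 1 = quo x * n%:Z + (cls x)%:Z.
Proof.
rewrite /cls /quo gez0_abs; first exact: divz_eq.
by case/andP: (modz_ge0_lt n_ge2 (x - 1)).
Qed.

Lemma cls_lt x : (cls x < n)%N.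
Proof. by rewrite /cls; have := modz_ge0_lt n_ge2 (x - 1); lia. Qed.

Lemma cls_quo_uniq x q (c : nat) : (c < n)%N -> x - 1 = q * n%:Z + c%:Z ->
  cls x = c /\ quo x = q.
Proof.
move=> c_lt xE; have c_rng : 0 <= c%:Z < n%:Z by lia.
by have [q_eq c_eq] := divz_modz_uniq n_ge2 c_rng xE; rewrite /cls /quo q_eq c_eq.
Qed.

Lemma cls_quo_addn x : cls (x + n%:Z) = cls x /\ quo (x + n%:Z) = quo x + 1.
Proof. by apply: cls_quo_uniq; [exact: cls_lt | have := cls_quoE x; lia]. Qed.

Lemma cls_inj_modz x y : cls x = cls y -> ((x - y) %% n%:Z)%Z = 0.
Proof.
move=> xy; rewrite (_ : x - y = (quo x - quo y) * n%:Z + 0) ?modzMDl ?mod0z //.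
by have := cls_quoE x; have := cls_quoE y; rewrite xy; lia.
Qed.

Lemma periodic_inj_cls_neq f a b : n_periodic n f -> injective f ->
  a != b -> `|a - b| < n%:Z -> cls (f a) != cls (f b).
Proof.
move=> f_per f_inj a_neq_b ab_lt; apply/eqP => /cls_inj_modz/eqP.
by apply/negP; exact: periodic_inj_modz_neq0.
Qed.

End ValueClasses.

Section SubwordPrefixes.
Local Open Scope ring_scope.
Variable n : nat.
Hypothesis n_ge2 : (2 <= n)%N.
Variable msk : seq bool.

Local Notation u := (prefix_prod n msk).
Local Notation cls := (cls n).
Local Notation quo := (quo n).

Lemma prefix_prodS t :
  u t.+1 =1 if nth false msk t then u t \o sref n (t %% n) else u t.
Proof.
move=> x; rewrite /prefix_prod /prefix_word -addn1 iotaD filter_cat map_cat /=.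
by case: (nth false msk t) => /=; rewrite word_eval_cat ?cats0.
Qed.

Lemma prefix_word_lt t : all (fun i => i < n)%N (prefix_word n msk t).
Proof. by apply/allP => i /mapP[p _ ->]; rewrite /lam_letter ltn_mod; lia. Qed.

Lemma affine_perm_prefix_prod t : affine_perm n (u t).
Proof. exact: (affine_perm_word_eval n_ge2 (prefix_word_lt t)). Qed.

Lemma prefix_prodS_at t : u t.+1 t.+1%:Z = u t (t + ~~ nth false msk t)%N%:Z.
Proof.
rewrite prefix_prodS; case: (nth false msk t) => /=; rewrite ?addn0 ?addn1 //.
by rewrite -addn1 PoszD sref_modn_atS.
Qed.

Lemma prefix_prodS_mid t d : (2 <= d < n)%N -> u t.+1 (t + d)%N%:Z = u t (t + d)%N%:Z.
Proof.
by move=> d_rng; rewrite prefix_prodS; case: (nth false msk t) => //=; rewrite sref_modn_fix.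
Qed.

Lemma prefix_prodS_end t :
  u t.+1 (t + n)%N%:Z = u t (t + nth false msk t)%N%:Z + n%:Z.
Proof.
have [u_per _ _] := affine_perm_prefix_prod t.
rewrite prefix_prodS PoszD; case: (nth false msk t) => /=; last by rewrite addn0 u_per.
by rewrite sref_addn sref_modn_at // addrAC u_per -addn1 PoszD.
Qed.

Definition step_cls t := cls (u t.+1 t.+1%:Z).

Local Notation occ := (occ step_cls).

(* The position of a value in the window t, ..., t + n - 1 of u t is determined by its
   class, its level, and the number of earlier steps of the same class. *)
Definition window_inv t := forall d, (d < n)%N ->
  let y := u t (t + d)%N%:Z in
  (t + d - (d != 0%N))%N%:Z = (cls y)%:Z + (occ (cls y) t)%:Z + n.-1%:Z * quo y.

Lemma window_inv0 : window_inv 0.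
Proof.
case=> [|d] d_lt /=.
  have [-> ->] : cls 0 = n.-1 /\ quo 0 = -1 by apply: cls_quo_uniq => //; lia.
  by rewrite /occ /=; lia.
have [-> ->] : cls d.+1%:Z = d /\ quo d.+1%:Z = 0 by apply: cls_quo_uniq => //; lia.
by rewrite /occ /=; lia.
Qed.

Lemma cls_prefix_prodS_neq t d : (0 < d < n)%N -> cls (u t.+1 (t.+1 + d)%N%:Z) != step_cls t.
Proof.
have [u_per u_inj _] := affine_perm_prefix_prod t.+1.
move=> d_rng; apply: periodic_inj_cls_neq => //; first by apply/eqP; lia.
by rewrite PoszD addrAC subrr add0r; lia.
Qed.

Lemma window_invS t : window_inv t -> window_inv t.+1.
Proof.
move=> inv_t d d_lt /=; case: (posnP d) => [-> | d_gt0].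
  rewrite addn0 subn0 occS eqxx prefix_prodS_at.
  have /= := inv_t (~~ nth false msk t) ltac:(lia).
  by case: (nth false msk t) => /=; rewrite ?addn0 ?addn1 /=; lia.
have d_rng : (0 < d < n)%N by lia.
rewrite occS eq_sym (negPf (cls_prefix_prodS_neq t d_rng)) addn0.
case: (ltnP d n.-1) => d_lt1.
  rewrite addSnnS prefix_prodS_mid; last by lia.
  by have /= := inv_t d.+1 ltac:(lia); lia.
rewrite (_ : (t.+1 + d = t + n)%N); last by lia.
rewrite prefix_prodS_end; have [-> ->] := cls_quo_addn n_ge2 (u t (t + nth false msk t)%N%:Z).
have /= := inv_t (nth false msk t) ltac:(lia).
by case: (nth false msk t) => /=; rewrite ?addn0 ?addn1 /=; lia.
Qed.

Lemma window_inv_all t : window_inv t.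
Proof. by elim: t => [|t IH]; [exact: window_inv0 | exact: window_invS]. Qed.

Lemma step_cls_le t : (step_cls t <= n.-1)%N.
Proof. by have := cls_lt n_ge2 (u t.+1 t.+1%:Z); rewrite /step_cls; lia. Qed.

Lemma step_cls_mod t : t = step_cls t + occ (step_cls t) t %[mod n.-1].
Proof.
have /= := window_inv_all t.+1 (ltac:(lia) : (0 < n)%N).
rewrite addn0 subn0 occS eqxx -/(step_cls t) => tE.
have {}tE : t%:Z = quo (u t.+1 t.+1%:Z) * n.-1%:Z + (step_cls t + occ (step_cls t) t)%N%:Z.
  by move: tE; lia.
by apply/eqP; rewrite -eqz_nat -!modz_nat tE modzMDl.
Qed.

Lemma prev_step_cls t : prev_val n.-1 step_cls t = cls (u t t%:Z).
Proof.
case: t => [|t] //=; symmetry.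
by have [] := cls_quo_uniq n_ge2 (ltac:(lia) : (n.-1 < n)%N) (ltac:(lia) : 0 - 1 = -1 * n%:Z + n.-1%:Z).
Qed.

Lemma is_break_skip t : is_break n.-1 step_cls t = ~~ nth false msk t.
Proof.
have [u_per u_inj _] := affine_perm_prefix_prod t.
rewrite /is_break prev_step_cls /step_cls prefix_prodS_at.
case: (nth false msk t) => /=; first by rewrite addn0 eqxx.
apply: periodic_inj_cls_neq => //; first by apply/eqP; lia.
by rewrite addn1 -addn1 PoszD addrAC subrr add0r; lia.
Qed.

Lemma occ_step_cls_final : u (n * n.-1) =1 id ->
  forall w, (w <= n.-1)%N -> occ w (n * n.-1) = n.-1.
Proof.
move=> u_id w w_le; set N := (n * n.-1)%N.
have NE : N%:Z = n%:Z * n%:Z - n%:Z.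
  by rewrite /N PoszM (_ : n.-1%:Z = n%:Z - 1); [ring | lia].
case: (ltnP w n.-1) => w_lt.
  have /= := window_inv_all N (ltac:(lia) : (w.+1 < n)%N); rewrite u_id.
  have [-> ->] : cls (N + w.+1)%N%:Z = w /\ quo (N + w.+1)%N%:Z = n.-1%:Z.
    by apply: cls_quo_uniq; rewrite ?PoszD ?NE; lia.
  by move: NE; nia.
have -> : w = n.-1 by lia.
have /= := window_inv_all N (ltac:(lia) : (0 < n)%N); rewrite u_id addn0 subn0.
have [-> ->] : cls N%:Z = n.-1 /\ quo N%:Z = n.-2%:Z.
  by apply: cls_quo_uniq; rewrite ?NE; nia.
by move: NE; nia.
Qed.

Lemma step_cls_last : u (n * n.-1) =1 id -> step_cls (n * n.-1).-1 = n.-1.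
Proof.
move=> u_id; rewrite /step_cls prednK ?muln_gt0; last by lia.
rewrite u_id; have [] // : cls (n * n.-1)%N%:Z = n.-1 /\ quo (n * n.-1)%N%:Z = n.-2%:Z.
by apply: cls_quo_uniq; rewrite ?PoszM; nia.
Qed.

(* The levels of the values at positions t and t + 1 differ by a multiple of n - 1
   read off from the window invariant at d = 0 and d = 1. *)
Lemma break_ascends_lt t : nth false msk t = false ->
  break_ascends n.-1 step_cls t -> u t t%:Z < u t (t%:Z + 1).
Proof.
move=> skip; rewrite /break_ascends prev_step_cls /step_cls prefix_prodS_at skip /= addn1.
have /= inv0 := window_inv_all t (ltac:(lia) : (0 < n)%N).
have /= inv1 := window_inv_all t (ltac:(lia) : (1 < n)%N).
rewrite addn0 subn0 in inv0; rewrite addn1 subn1 /= in inv1.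
have := cls_quoE n_ge2 (u t t%:Z); have := cls_quoE n_ge2 (u t t.+1%:Z).
have := cls_lt n_ge2 (u t t%:Z); have := cls_lt n_ge2 (u t t.+1%:Z).
rewrite (_ : t%:Z + 1 = t.+1%:Z); last by lia.
move: inv0 inv1; set X := u t t%:Z; set Y := u t t.+1%:Z.
set h := cls X; set a := cls Y; set qh := quo X; set qa := quo Y.
set ah := occ h t; set aa := occ a t => inv0 inv1 a_lt h_lt YE XE.
have lvl : n.-1%:Z * (qa - qh) = (h + ah)%N%:Z - (a + aa)%N%:Z by rewrite !PoszD; lia.
have n1_gt0 : 0 < n.-1%:Z by lia.
case/orP => [lt_sum | /andP[/eqP eq_sum h_lt_a]].
  have : 1 <= qa - qh by nia.
  by nia.
have : qa = qh by nia.
by lia.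
Qed.

Lemma prefix_prod_skip_lt j : in_Sn n msk -> (j < n * (n - 1))%N ->
  nth false msk j = false -> u j j%:Z < u j (j%:Z + 1).
Proof.
move=> [msk_size [skip_count u_id]] j_lt skip; rewrite subn1 in msk_size u_id j_lt.
have NE : (n.-1.+1 * n.-1 = n * n.-1)%N by rewrite prednK; lia.
apply: (break_ascends_lt skip).
apply: (@breaks_ascend n.-1 _ step_cls); rewrite ?NE //.
- by lia.
- exact: step_cls_le.
- exact: step_cls_mod.
- exact: occ_step_cls_final.
- exact: step_cls_last.
- by rewrite (eq_count is_break_skip) -msk_size -count_negb_nth skip_count; lia.
- by rewrite is_break_skip skip.
Qed.

End SubwordPrefixes.

Theorem corollary5p15 (n : nat) (m : seq bool) (j : nat) :
  (2 <= n)%N -> in_Sn n m -> (j < n * (n - 1))%N ->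
  (exists a b : nat,
      has_length n (prefix_prod n m j \o sref n (lam_letter n j)) a /\
      has_length n (prefix_prod n m j) b /\ (a < b)%N) ->
  nth false m j = true.
Proof.
move=> n_ge2 m_S j_lt [a [b [a_len [b_len a_lt_b]]]].
apply/negPn/negP => /negbTE skip.
have [u_per _ _] := has_length_affine_perm n_ge2 b_len.
have := prefix_prod_skip_lt n_ge2 m_S j_lt skip.
rewrite (n_periodic_ltS_modz _ u_per) modz_nat => j_asc.
have := has_length_sref_gt n_ge2 (ltn_pmod j (ltnW n_ge2)) j_asc a_len b_len.
lia.
Qed.
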